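(* Let $p\ge 2$ and let $\mathbf{x}_1,\dots,\mathbf{x}_p\in\mathbb{R}^n$ be vectors such that each has mean zero, $\bar{x}_i=\frac1n\sum_{k=1}^n x_{ki}=0$, and unit Euclidean length, $\|\mathbf{x}_i\|=1$, for $i=1,\dots,p$. Suppose $$|\mathrm{corr}(\mathbf{x}_i,\mathbf{x}_1)|>\frac{\sqrt{2}}{2}\qquad\text{for } i=2,3,\dots,p.$$ Then, among the $2^p$ sets of size $p$ formed by choosing exactly one element from $\{\mathbf{x}_j,-\mathbf{x}_j\}$ for each $j=1,2,\dots,p$, there exists a set in which every pair of (distinct) vectors has a positive correlation.
   Context: Here $\mathrm{corr}(\mathbf{u},\mathbf{v})$ denotes the sample (Pearson) correlation coefficient of two vectors $\mathbf{u},\mathbf{v}\in\mathbb{R}^n$; for vectors with mean zero and unit length it equals the inner product $\mathbf{u}\cdot\mathbf{v}$. *)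

From mathcomp Require Import all_boot all_order all_algebra.
Set Implicit Arguments. Unset Strict Implicit. Unset Printing Implicit Defensive.
Import Order.TTheory GRing.Theory Num.Theory.
Local Open Scope ring_scope.

Definition mean (R : rcfType) (n : nat) (u : 'I_n -> R) : R :=
  (\sum_(k < n) u k) / n%:R.

Definition corr (R : rcfType) (n : nat) (u v : 'I_n -> R) : R :=
  (\sum_(k < n) (u k - mean u) * (v k - mean v)) /
  (Num.sqrt (\sum_(k < n) (u k - mean u) ^+ 2) *
   Num.sqrt (\sum_(k < n) (v k - mean v) ^+ 2)).

Definition enorm (R : rcfType) (n : nat) (u : 'I_n -> R) : R :=
  Num.sqrt (\sum_(k < n) u k ^+ 2).

Definition flip (R : rcfType) (n : nat) (b : bool) (u : 'I_n -> R) : 'I_n -> R :=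
  fun k => if b then - u k else u k.

From mathcomp Require Import all_boot all_order all_algebra.
From mathcomp Require Import ring lra.
Set Implicit Arguments. Unset Strict Implicit. Unset Printing Implicit Defensive.
Import Order.TTheory GRing.Theory Num.Theory.
Local Open Scope ring_scope.

(* For centred unit vectors the correlation is the inner product, so after
   flipping every vector to make its inner product with the first one
   positive, each lies within 45 degrees of the first.  Two unit vectors
   [u], [v] with [<u, w> = a] and [<v, w> = b] satisfy
   [0 <= |u + v - (a + b) w|^2 = 2 + 2 <u, v> - (a + b)^2],
   so [a, b > sqrt 2 / 2] forces [<u, v> > 0]. *)

Definition dot (R : pzSemiRingType) (n : nat) (u v : 'I_n -> R) : R :=
  \sum_(k < n) u k * v k.

Lemma dotC (R : comPzSemiRingType) n (u v : 'I_n -> R) : dot u v = dot v u.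
Proof. by apply: eq_bigr => k _; rewrite mulrC. Qed.

Section Flip.
Variables (R : rcfType) (n : nat).
Implicit Types (u v : 'I_n -> R) (b c : bool).

Lemma flipE b u k : flip b u k = (-1) ^+ b * u k.
Proof. by case: b; rewrite /flip ?mulN1r ?mul1r. Qed.

Lemma mean_flip b u : mean (flip b u) = (-1) ^+ b * mean u.
Proof. by rewrite /mean; under eq_bigr do rewrite flipE; rewrite -mulr_sumr mulrA. Qed.

Lemma enorm_flip b u : enorm (flip b u) = enorm u.
Proof. by rewrite /enorm; under eq_bigr do rewrite flipE exprMn sqrr_sign mul1r. Qed.

Lemma dot_flip b c u v : dot (flip b u) (flip c v) = (-1) ^+ (b (+) c) * dot u v.
Proof.
rewrite signr_addb /dot mulr_sumr; apply: eq_bigr => k _; rewrite !flipE; ring.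
Qed.

Lemma dot_flip_sign u v : dot (flip (dot u v < 0) u) v = `|dot u v|.
Proof.
have := dot_flip (dot u v < 0) false u v; rewrite addbF => ->.
by case: ltrP => [/ltr0_norm | /ger0_norm] ->; rewrite ?expr1 ?mulN1r ?mul1r.
Qed.

End Flip.

Lemma dot_enorm (R : rcfType) n (u : 'I_n -> R) : dot u u = enorm u ^+ 2.
Proof.
rewrite sqr_sqrtr; last by apply: sumr_ge0 => k _; exact: sqr_ge0.
by apply: eq_bigr => k _; rewrite expr2.
Qed.

Lemma corr_centered (R : rcfType) n (u v : 'I_n -> R) :
  mean u = 0 -> mean v = 0 -> corr u v = dot u v / (enorm u * enorm v).
Proof.
rewrite /corr => -> ->.
under eq_bigr do rewrite !subr0.
under [in Num.sqrt _ * _]eq_bigr do rewrite subr0.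
by under [X in _ * Num.sqrt X]eq_bigr do rewrite subr0.
Qed.

Lemma corr_dot (R : rcfType) n (u v : 'I_n -> R) :
  mean u = 0 -> mean v = 0 -> enorm u = 1 -> enorm v = 1 -> corr u v = dot u v.
Proof. by move=> mu mv nu nv; rewrite corr_centered // nu nv mulr1 divr1. Qed.

Lemma dot_unit_sqr_le (R : realFieldType) n (u v w : 'I_n -> R) :
  dot u u = 1 -> dot v v = 1 -> dot w w = 1 ->
  (dot u w + dot v w) ^+ 2 <= 2 + 2 * dot u v.
Proof.
move=> uu vv ww; set d := dot u w + dot v w.
have : 0 <= \sum_(k < n) (u k + v k - d * w k) ^+ 2.
  by apply: sumr_ge0 => k _; exact: sqr_ge0.
have -> : \sum_(k < n) (u k + v k - d * w k) ^+ 2 =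
    dot u u + dot v v + d ^+ 2 * dot w w + 2 * dot u v
    - 2 * d * dot u w - 2 * d * dot v w.
  rewrite /dot !mulr_sumr -!sumrN -!big_split; apply: eq_bigr => k _ /=; ring.
rewrite uu vv ww /d; nra.
Qed.

Lemma dot_gt0_of_close (R : rcfType) n (u v w : 'I_n -> R) :
  dot u u = 1 -> dot v v = 1 -> dot w w = 1 ->
  Num.sqrt 2 / 2 < dot u w -> Num.sqrt 2 / 2 < dot v w -> 0 < dot u v.
Proof.
move=> uu vv ww uw vw; have := dot_unit_sqr_le uu vv ww.
have s2 : Num.sqrt (2 : R) ^+ 2 = 2 by rewrite sqr_sqrtr // ler0n.
have : Num.sqrt 2 < dot u w + dot v w by lra.
have := sqrtr_ge0 (2 : R); nra.
Qed.

Lemma dot_gt0_of_hub (R : rcfType) n p (y : 'I_p -> 'I_n -> R) (i0 : 'I_p) :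
  (forall i, dot (y i) (y i) = 1) ->
  (forall i, i != i0 -> Num.sqrt 2 / 2 < dot (y i) (y i0)) ->
  forall i j, i != j -> 0 < dot (y i) (y j).
Proof.
move=> y_unit y_close i j.
have s0 : 0 < Num.sqrt (2 : R) / 2 by rewrite divr_gt0 // sqrtr_gt0.
have [-> i0_ne_j | i_ne_i0 _] := eqVneq i i0.
  by rewrite dotC; apply: lt_trans s0 (y_close j _); rewrite eq_sym.
have [-> | j_ne_i0] := eqVneq j i0; first exact: lt_trans s0 (y_close i i_ne_i0).
by apply: (dot_gt0_of_close (y_unit i) (y_unit j) (y_unit i0)); apply: y_close.
Qed.

Theorem theorem1 (R : rcfType) (n p : nat) (hp : (2 <= p)%N)
  (x : 'I_p -> 'I_n -> R)
  (hmean : forall i : 'I_p, mean (x i) = 0)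
  (hnorm : forall i : 'I_p, enorm (x i) = 1)
  (hcorr : forall i j : 'I_p, val j = 0%N -> i != j ->
     Num.sqrt 2 / 2 < `| corr (x i) (x j) |) :
  exists s : 'I_p -> bool,
    forall i j : 'I_p, i != j -> 0 < corr (flip (s i) (x i)) (flip (s j) (x j)).
Proof.
pose i0 : 'I_p := Ordinal (ltnW hp).
pose s i := dot (x i) (x i0) < 0.
have unit_x i : dot (x i) (x i) = 1 by rewrite dot_enorm hnorm expr1n.
have s_i0 : s i0 = false by rewrite /s unit_x ltr10.
pose y i := flip (s i) (x i).
exists s => i j ij.
rewrite corr_dot ?mean_flip ?enorm_flip ?hmean ?hnorm ?mulr0 //.
apply: (@dot_gt0_of_hub _ _ _ y i0) ij => [k | k k_ne].
  by rewrite dot_flip addbb mul1r unit_x.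
rewrite /y s_i0 dot_flip_sign -corr_dot //; exact: hcorr.
Qed.
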